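(* The function $U(n)=\sum_{j=1}^n\frac{1}{j^2}$ of the positive integer variable $n$ is a transcendental function in $n$ over $\overline{\mathbb{Q}}$.
   Context: $\overline{\mathbb{Q}}\subseteq\mathbb{C}$ denotes the field of algebraic numbers. A function $f(n)$ of the positive integer variable $n$ is an algebraic function over a subfield $K\subseteq\mathbb{C}$ if there exist polynomials $q_0,\dots,q_k\in K[n]$ with $q_k\neq 0$ such that $q_k(n)f(n)^k+\cdots+q_1(n)f(n)+q_0(n)=0$ for all positive integers $n$; otherwise $f$ is a transcendental function over $K$. *)

(* Qbar (the field of algebraic numbers inside C) is modelled
   by mathcomp's [algC], the algebraic closure of Q with conjugation. *)
From HB Require Import structures.
From mathcomp Require Import all_boot all_order all_algebra all_field.
Set Implicit Arguments. Unset Strict Implicit. Unset Printing Implicit Defensive.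
Import Order.TTheory GRing.Theory Num.Theory.
Local Open Scope ring_scope.

(* f : positive integers -> algC (values at n = 0 are irrelevant).
   f is algebraic over Qbar iff there are k and polynomials q_0..q_k in Qbar[n]
   with q_k <> 0 and  sum_{i<=k} q_i(n) f(n)^i = 0  for all positive integers n. *)
Definition algebraic_fun (f : nat -> algC) : Prop :=
  exists (k : nat) (q : nat -> {poly algC}),
    q k != 0 /\
    forall n : nat, (0 < n)%N ->
      \sum_(i < k.+1) (q i).[n%:R] * f n ^+ i = 0.

Definition transcendental_fun (f : nat -> algC) : Prop := ~ algebraic_fun f.

Definition U (n : nat) : algC := \sum_(1 <= j < n.+1) (j%:R ^+ 2)^-1.

(* If F(n, U n) = 0 for all n > 0, with F of least degree k in the second
   variable, then so does a^k F(X + 1, Y + 1/a), a = (X + 1)^2, because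
   U (n + 1) = U n + 1/(n + 1)^2.  Eliminating the leading coefficient between
   the two annihilators leaves one of smaller degree, hence zero, and its next
   coefficient says that the two leading coefficients Q, P of F satisfy
   P/Q - (P/Q)(X + 1) = k/(X + 1)^2.  Telescoping 2j times gives
   P/Q - (P/Q)(X + 2j) = k (1/(X + 1)^2 + ... + 1/(X + 2j)^2), which is absurd at
   X = -j, where only the right-hand side has a pole. *)

From mathcomp Require Import all_boot all_order all_algebra all_field.
From mathcomp Require Import ring.

Set Implicit Arguments.
Unset Strict Implicit.
Unset Printing Implicit Defensive.

Import Order.TTheory GRing.Theory Num.Theory.
Local Open Scope ring_scope.

Local Notation "p ^> x" := (p \Po ('X + x%:P)) (at level 2, format "p ^> x").

Section NaturalRoots.
Variable R : numDomainType.
Implicit Type p : {poly R}.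

Lemma poly_nat_nonroot p : p != 0 -> exists2 n, (0 < n)%N & ~~ root p n%:R.
Proof.
move=> p0; pose rs := [seq i.+1%:R | i <- iota 0 (size p)] : seq R.
have /hasP[_ /mapP[i _ ->] pi] : has (predC (root p)) rs.
  rewrite has_predC; apply: contra p0 => /roots_geq_poly_eq0 -> //.
    by rewrite map_inj_uniq ?iota_uniq // => i j /eqP; rewrite eqr_nat => /eqP[].
  by rewrite size_map size_iota.
by exists i.+1.
Qed.

Lemma poly_eq0_nat_roots p : (forall n, (0 < n)%N -> p.[n%:R] = 0) -> p = 0.
Proof.
move=> p_nat0; apply/eqP; apply: contraT => /poly_nat_nonroot[n n_gt0].
by rewrite rootE p_nat0 ?eqxx.
Qed.

End NaturalRoots.

Section InverseSquareSum.
Variable R : numDomainType.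

(* [isq_num N / isq_den N] is [\sum_(1 <= j <= N) 1 / ('X + j)^2]. *)
Fixpoint isq_den N : {poly R} :=
  if N is M.+1 then isq_den M * ('X + N%:R%:P) ^+ 2 else 1.

Fixpoint isq_num N : {poly R} :=
  if N is M.+1 then isq_num M * ('X + N%:R%:P) ^+ 2 + isq_den M else 0.

Lemma isq_denS N : isq_den N.+1 = isq_den N * ('X + N.+1%:R%:P) ^+ 2.
Proof. by []. Qed.

Lemma isq_numS N : isq_num N.+1 = isq_num N * ('X + N.+1%:R%:P) ^+ 2 + isq_den N.
Proof. by []. Qed.

Lemma horner_sqr_XaddC_nat (i j : nat) :
  (('X + i%:R%:P) ^+ 2).[- j%:R] == 0 :> R = (i == j).
Proof. by rewrite horner_exp hornerD hornerX hornerC sqrf_eq0 addrC subr_eq0 eqr_nat. Qed.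

Lemma isq_den_root N j : (0 < j <= N)%N -> (isq_den N).[- j%:R] = 0.
Proof.
elim: N => [|N IH] /andP[j_gt0]; first by rewrite leqn0 => /eqP j0; rewrite j0 in j_gt0.
rewrite leq_eqVlt ltnS isq_denS hornerM => /orP[/eqP->|jN].
  have /eqP-> : (('X + N.+1%:R%:P) ^+ 2).[- N.+1%:R] == 0 :> R
    by rewrite horner_sqr_XaddC_nat.
  by rewrite mulr0.
by rewrite IH ?mul0r ?j_gt0.
Qed.

Lemma isq_den_nonroot N j : (N < j)%N -> (isq_den N).[- j%:R] != 0.
Proof.
elim: N => [|N IH] jN; first by rewrite hornerC oner_eq0.
rewrite isq_denS hornerM mulf_neq0 ?IH ?horner_sqr_XaddC_nat ?(ltnW jN) //.
by rewrite neq_ltn jN.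
Qed.

Lemma isq_num_nonroot N j : (0 < j <= N)%N -> (isq_num N).[- j%:R] != 0.
Proof.
elim: N => [|N IH] /andP[j_gt0]; first by rewrite leqn0 => /eqP j0; rewrite j0 in j_gt0.
rewrite leq_eqVlt ltnS isq_numS hornerD hornerM => /orP[/eqP->|jN].
  have /eqP-> : (('X + N.+1%:R%:P) ^+ 2).[- N.+1%:R] == 0 :> R
    by rewrite horner_sqr_XaddC_nat.
  by rewrite mulr0 add0r isq_den_nonroot.
rewrite isq_den_root ?j_gt0 // addr0 mulf_neq0 ?IH ?j_gt0 ?horner_sqr_XaddC_nat //.
by rewrite neq_ltn ltnS jN orbT.
Qed.

End InverseSquareSum.

Section InverseSquareAntidifference.
Variable R : numDomainType.
Variables (P Q : {poly R}) (c : R).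
Hypothesis Q_neq0 : Q != 0.

(* Cleared of denominators, [P/Q - (P/Q)(X + 1) = c / (X + 1)^2]. *)
Hypothesis antidiff :
  Q ^> 1 * ('X + 1) ^+ 2 * P = Q * (('X + 1) ^+ 2 * P ^> 1 + c%:P * Q ^> 1).

Lemma shift_polyD (p : {poly R}) x y : (p ^> x) ^> y = p ^> (y + x).
Proof. by rewrite -comp_polyA comp_polyD comp_polyX comp_polyC rmorphD addrA. Qed.

Lemma antidiff_shift x :
  Q ^> (x + 1) * ('X + (x + 1)%:P) ^+ 2 * P ^> x
  = Q ^> x * (('X + (x + 1)%:P) ^+ 2 * P ^> (x + 1) + c%:P * Q ^> (x + 1)).
Proof.
have := congr1 (comp_poly ('X + x%:P)) antidiff.
by rewrite !(comp_polyM, comp_polyD, comp_polyC, comp_polyX, rmorphXn) /=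
  !shift_polyD -addrA -polyCD.
Qed.

Lemma isq_telescope N :
  (P * Q ^> N%:R - P ^> N%:R * Q) * isq_den R N = c%:P * Q * Q ^> N%:R * isq_num R N.
Proof.
elim: N => [|N IH].
  by rewrite /= mulr0n polyC0 addr0 !comp_polyXr; ring.
have QN_neq0 : Q ^> N%:R != 0 by rewrite comp_poly2_eq0 ?size_XaddC.
have := antidiff_shift N%:R; rewrite natr1 isq_denS isq_numS.
set s := ('X + _) ^+ 2 => antidiffN.
apply: (mulIf QN_neq0).
have QN1P : Q ^> N%:R * s * P ^> N.+1%:R
    = Q ^> N.+1%:R * s * P ^> N%:R - c%:P * Q ^> N%:R * Q ^> N.+1%:R.
  by rewrite antidiffN; ring.
transitivity (P * Q ^> N.+1%:R * isq_den R N * s * Q ^> N%:R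
              - Q * isq_den R N * (Q ^> N%:R * s * P ^> N.+1%:R)); first by ring.
rewrite QN1P.
transitivity (Q ^> N.+1%:R * s * ((P * Q ^> N%:R - P ^> N%:R * Q) * isq_den R N)
              + c%:P * Q * Q ^> N%:R * Q ^> N.+1%:R * isq_den R N); first by ring.
by rewrite IH; ring.
Qed.
End InverseSquareAntidifference.

Lemma invsq_no_rational_antidifference (R : numDomainType) (P Q : {poly R}) (c : R) :
  Q != 0 -> c != 0 ->
  Q ^> 1 * ('X + 1) ^+ 2 * P != Q * (('X + 1) ^+ 2 * P ^> 1 + c%:P * Q ^> 1).
Proof.
move=> Q_neq0 c_neq0; apply/eqP => antidiff.
have sizeNX : size (- 'X : {poly R}) = 2 by rewrite size_opp size_polyX.
have [j j_gt0] : exists2 j, (0 < j)%N & ~~ root (Q * (Q \Po - 'X)) j%:R.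
  by apply: poly_nat_nonroot; rewrite mulf_neq0 ?comp_poly2_eq0.
rewrite rootE hornerM horner_comp hornerN hornerX mulf_eq0 negb_or => /andP[Qj QNj].
have := congr1 (horner^~ (- j%:R)) (isq_telescope Q_neq0 antidiff (j + j)).
rewrite /= hornerM isq_den_root ?j_gt0 ?leq_addl // mulr0 => /esym/eqP.
apply/negP; rewrite !hornerM hornerC horner_comp !hornerE natrD addKr.
by rewrite !mulf_neq0 ?isq_num_nonroot ?j_gt0 ?leq_addl.
Qed.

Lemma horner2E (R : comNzRingType) (F : {poly {poly R}}) x y s :
  (size F <= s)%N -> F.[y, x] = \sum_(i < s) (F`_i).[x] * y ^+ i.
Proof.
move=> sizeF; rewrite (horner_coef_wide _ sizeF) horner_sum.
by apply: eq_bigr => i _; rewrite hornerM horner_exp hornerC.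
Qed.

Lemma coef_expCXadd1 (R : comNzRingType) (b : R) i j :
  ((b%:P * 'X + 1) ^+ i)`_j = b ^+ j *+ 'C(i, j).
Proof.
rewrite exprD1n (_ : \sum_(l < i.+1) _ = \poly_(l < i.+1) (b ^+ l *+ 'C(i, l))).
  by rewrite coef_poly ltnS; case: leqP => // ij; rewrite bin_small ?mulr0n.
rewrite poly_def; apply: eq_bigr => l _.
by rewrite exprMn -rmorphXn mul_polyC scalerMnl.
Qed.

Lemma U_S n : U n.+1 = U n + (n.+1%:R ^+ 2)^-1.
Proof. by rewrite /U big_nat_recr. Qed.

Local Notation a := (('X + 1) ^+ 2 : {poly algC}).
Implicit Types F : {poly {poly algC}}.

(* [a ^+ k * F(X + 1, Y + 1 / a)], the denominators of [U n.+1 = U n + 1 / (n + 1)^2]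
   cleared. *)
Definition shiftU k (F : {poly {poly algC}}) : {poly {poly algC}} :=
  \sum_(i < k.+1) ((F`_i) ^> 1 * a ^+ (k - i))%:P * (a%:P * 'X + 1) ^+ i.

Lemma horner2_shiftU k F n : (size F <= k.+1)%N ->
  (shiftU k F).[U n, n%:R] = (n.+1%:R ^+ 2) ^+ k * F.[U n.+1, n.+1%:R].
Proof.
move=> sizeF; rewrite (horner2E _ _ sizeF) mulr_sumr !horner_sum.
apply: eq_bigr => i _; rewrite hornerCM hornerM horner_exp.
rewrite !(hornerE, horner_comp) U_S -natr1.
set t := n%:R + 1 : algC; have t_neq0 : t != 0 by rewrite /t natr1 pnatr_eq0.
rewrite (_ : t ^+ 2 * U n + 1 = t ^+ 2 * (U n + (t ^+ 2)^-1)); last by field.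
have -> : (t ^+ 2) ^+ k = (t ^+ 2) ^+ (k - i) * (t ^+ 2) ^+ i.
  by rewrite -exprD subnK // -ltnS.
by rewrite [(t ^+ 2 * _) ^+ i]exprMn -[RHS]/(_ * _ * _); ring.
Qed.

Lemma coef_shiftU k F j :
  (shiftU k F)`_j = \sum_(i < k.+1) (F`_i) ^> 1 * a ^+ (k - i) * (a ^+ j *+ 'C(i, j)).
Proof. by rewrite coef_sum; apply: eq_bigr => i _; rewrite coefCM coef_expCXadd1. Qed.

Lemma size_shiftU k F : (size (shiftU k F) <= k.+1)%N.
Proof.
apply/leq_sizeP => j kj; rewrite coef_shiftU big1 // => i _.
by rewrite bin_small ?mulr0n ?mulr0 // (leq_trans (ltn_ord i)).
Qed.

Lemma coef_shiftU_top k F : (shiftU k F)`_k = (F`_k) ^> 1 * a ^+ k.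
Proof.
rewrite coef_shiftU big_ord_recr /= big1 ?add0r; last first.
  by move=> i _; rewrite bin_small ?mulr0n ?mulr0.
by rewrite subnn binn expr0 mulr1.
Qed.

Lemma coef_shiftU_next k F :
  (shiftU k.+1 F)`_k = ((F`_k) ^> 1 * a + (F`_k.+1) ^> 1 *+ k.+1) * a ^+ k.
Proof.
rewrite coef_shiftU !big_ord_recr big1 /= ?add0r; last first.
  by move=> i _; rewrite bin_small ?mulr0n ?mulr0.
by rewrite subnn subSnn binn binSn; ring.
Qed.

Definition reduceU k (F : {poly {poly algC}}) : {poly {poly algC}} :=
  ((shiftU k F)`_k)%:P * F - (F`_k)%:P * shiftU k F.

Lemma size_reduceU k F : (size F <= k.+1)%N -> (size (reduceU k F) <= k)%N.
Proof.
move=> sizeF; apply/leq_sizeP => j kj; rewrite coefB !coefCM.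
case: (ltngtP j k) kj => // [kj _ | -> _]; last by rewrite mulrC subrr.
rewrite [F`_j]nth_default ?[(shiftU k F)`_j]nth_default ?mulr0 ?subr0 //.
  exact: leq_trans (size_shiftU k F) kj.
exact: leq_trans sizeF kj.
Qed.

Lemma horner2_reduceU k F :
  (size F <= k.+1)%N -> (forall n, (0 < n)%N -> F.[U n, n%:R] = 0) ->
  forall n, (0 < n)%N -> (reduceU k F).[U n, n%:R] = 0.
Proof.
move=> sizeF F_U0 n n_gt0; rewrite !(hornerD, hornerN, hornerCM, hornerM).
by rewrite F_U0 // horner2_shiftU // F_U0 ?mulr0 ?subr0.
Qed.

Lemma coef_reduceU_next m F : (reduceU m.+1 F)`_m =
  ((F`_m.+1) ^> 1 * a * F`_m
     - F`_m.+1 * (a * (F`_m) ^> 1 + (m.+1%:R)%:P * (F`_m.+1) ^> 1)) * a ^+ m.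
Proof.
rewrite coefB !coefCM coef_shiftU_top coef_shiftU_next.
by rewrite rmorph_nat -mulr_natl exprS; ring.
Qed.

Lemma horner2_U_eq0 F : (forall n, (0 < n)%N -> F.[U n, n%:R] = 0) -> F = 0.
Proof.
have [s] := ubnP (size F); elim: s F => // s IH F; rewrite ltnS => sizeF F_U0.
have [//|F_neq0] := eqVneq F 0; exfalso.
have : F`_(size F).-1 != 0 by rewrite -lead_coefE lead_coef_eq0.
have [k sizeFk] : exists k, size F = k.+1.
  by exists (size F).-1; rewrite prednK // size_poly_gt0.
rewrite sizeFk /=; case: k sizeFk => [|m] sizeFk lead_neq0.
  apply: (negP lead_neq0); apply/eqP/poly_eq0_nat_roots => n /F_U0.
  by rewrite (horner2E _ _ (eq_leq sizeFk)) big_ord1 expr0 mulr1.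
have sizeF1 : (size F <= m.+2)%N by rewrite sizeFk.
have reduceF0 : reduceU m.+1 F = 0.
  apply: IH; first by rewrite (leq_ltn_trans (size_reduceU sizeF1)) // -sizeFk.
  exact: horner2_reduceU.
have := congr1 (coefp m) reduceF0; rewrite /= coef_reduceU_next coef0 => /eqP.
have a_neq0 : a != 0 by rewrite expf_neq0 // -size_poly_eq0 -polyC1 size_XaddC.
rewrite mulf_eq0 (negbTE (expf_neq0 m a_neq0)) orbF subr_eq0.
by apply/negP/invsq_no_rational_antidifference; rewrite ?pnatr_eq0.
Qed.

Theorem mainTheorem12 : transcendental_fun U.
Proof.
move=> [k [q [qk_neq0 q_U0]]].
pose F : {poly {poly algC}} := \poly_(i < k.+1) q i.
have F0 : F = 0.
  apply: horner2_U_eq0 => n n_gt0; rewrite -(q_U0 n n_gt0).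
  by rewrite (horner2E _ _ (size_poly _ _)); apply: eq_bigr => i _; rewrite coef_poly ltn_ord.
have := congr1 (coefp k) F0; rewrite /= coef_poly ltnSn coef0 => qk0.
by rewrite qk0 eqxx in qk_neq0.
Qed.
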